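(* For all $x\in\mathbb{C}$ with $x\neq 0$ and all integers $n\ge0$, \[ \sum_{k=0}^n 2^k\frac{L_k(x)}{x^k}=2^{n+1}\frac{F_{n+1}(x)}{x^n}, \] and, if moreover $x\neq\pm 2i$, \[ \sum_{k=0}^n 2^k\frac{F_k(x)}{x^k}=\frac{x}{x^2+4}\Big(2^{n+1}\frac{L_{n+1}(x)}{x^{n+1}}-2\Big). \]
   Context: The Fibonacci polynomials $F_n(x)$ and Lucas polynomials $L_n(x)$ are defined by $F_0(x)=0$, $F_1(x)=1$, $L_0(x)=2$, $L_1(x)=x$ and $W_n(x)=xW_{n-1}(x)+W_{n-2}(x)$ for $n\ge2$ (for $W=F$ and $W=L$). Here $i=\sqrt{-1}$. *)

From mathcomp Require Import all_boot all_order all_algebra.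
From mathcomp Require Import complex.
From mathcomp Require Import reals Rstruct.
Set Implicit Arguments. Unset Strict Implicit. Unset Printing Implicit Defensive.
Import Order.TTheory GRing.Theory Num.Theory.
Local Open Scope ring_scope.

Notation C := (complex Rdefinitions.R).

Fixpoint fibP {T : pzRingType} (n : nat) (x : T) : T :=
  match n with
  | 0 => 0
  | 1 => 1
  | (m.+1 as n1).+1 => x * fibP n1 x + fibP m x
  end.

Fixpoint lucP {T : pzRingType} (n : nat) (x : T) : T :=
  match n with
  | 0 => 2
  | 1 => x
  | (m.+1 as n1).+1 => x * lucP n1 x + lucP m x
  end.

From mathcomp Require Import all_boot all_order all_algebra.
From mathcomp Require Import complex.
From mathcomp Require Import reals Rstruct.
From mathcomp Require Import ring.
Set Implicit Arguments. Unset Strict Implicit. Unset Printing Implicit Defensive.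
Import GRing.Theory Num.Theory.
Local Open Scope ring_scope.

(* Induction on n, after clearing denominators, reduces each sum to one
   identity between consecutive Fibonacci and Lucas values: L_(n+1) = F_(n+2) + F_n
   for the Lucas sum and (x^2 + 4) F_(n+1) = x L_(n+1) + 2 L_n for the Fibonacci
   sum.  Both identities hold because their two sides satisfy the recurrence
   w_(n+2) = x w_(n+1) + w_n and agree at n = 0 and n = 1.  Over C, the condition
   x <> +-2i is exactly x^2 + 4 <> 0. *)

Section Recurrence.
Variables (R : pzRingType) (x : R).

Lemma fibP_SS n : fibP n.+2 x = x * fibP n.+1 x + fibP n x. Proof. by []. Qed.
Lemma lucP_SS n : lucP n.+2 x = x * lucP n.+1 x + lucP n x. Proof. by []. Qed.

Definition fibonacci_like (w : nat -> R) := forall n, w n.+2 = x * w n.+1 + w n.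

Lemma fibonacci_like_eq (w v : nat -> R) :
  fibonacci_like w -> fibonacci_like v -> w 0 = v 0 -> w 1 = v 1 -> w =1 v.
Proof.
move=> wS vS w0 w1 n; suff [] : w n = v n /\ w n.+1 = v n.+1 by [].
by elim: n => [|n [IHn IHnS]]; split; rewrite // wS vS IHn IHnS.
Qed.

End Recurrence.

Section FibonacciLucas.
Variables (R : comPzRingType) (x : R).

Lemma lucP_fibP n : lucP n.+1 x = fibP n.+2 x + fibP n x.
Proof.
apply: (@fibonacci_like_eq _ x (fun n => lucP n.+1 x)
                               (fun n => fibP n.+2 x + fibP n x)).
- by [].
- by move=> m; rewrite !fibP_SS; ring.
- by rewrite /=; ring.
- by rewrite /=; ring.
Qed.

Lemma sqr_add4_fibP n : (x ^+ 2 + 4) * fibP n.+1 x = x * lucP n.+1 x + 2 * lucP n x.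
Proof.
apply: (@fibonacci_like_eq _ x (fun n => (x ^+ 2 + 4) * fibP n.+1 x)
                               (fun n => x * lucP n.+1 x + 2 * lucP n x)).
- by move=> m; rewrite fibP_SS; ring.
- by move=> m; rewrite !lucP_SS; ring.
- by rewrite /=; ring.
- by rewrite /=; ring.
Qed.

End FibonacciLucas.

Section WeightedSums.
Variables (F : fieldType) (x : F).
Hypothesis x_neq0 : x != 0.

Lemma sum_lucP n :
  \sum_(0 <= k < n.+1) 2 ^+ k * lucP k x / x ^+ k = 2 ^+ n.+1 * fibP n.+1 x / x ^+ n.
Proof.
have xn_neq0 m : x ^+ m != 0 by rewrite expf_neq0.
elim: n => [|n IHn]; first by rewrite big_nat1 /= !expr0 mul1r expr1 mulr1.
rewrite big_nat_recr // -[LHS]/(_ + _) IHn lucP_fibP (fibP_SS x n) !exprS.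
by field; rewrite xn_neq0 x_neq0.
Qed.

Hypothesis sqr_add4_neq0 : x ^+ 2 + 4 != 0.

Lemma sum_fibP n :
  \sum_(0 <= k < n.+1) 2 ^+ k * fibP k x / x ^+ k
    = x / (x ^+ 2 + 4) * (2 ^+ n.+1 * lucP n.+1 x / x ^+ n.+1 - 2).
Proof.
have xn_neq0 m : x ^+ m != 0 by rewrite expf_neq0.
suff cleared : (x ^+ 2 + 4) * \sum_(0 <= k < n.+1) 2 ^+ k * fibP k x / x ^+ k
               = 2 ^+ n.+1 * lucP n.+1 x / x ^+ n - 2 * x.
  apply: (mulfI sqr_add4_neq0); rewrite cleared !exprS.
  by field; rewrite xn_neq0 x_neq0 sqr_add4_neq0.
elim: n => [|n IHn].
  by rewrite big_nat1 /= mulr0 !mul0r mulr0 !expr0 expr1 divr1 subrr.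
rewrite big_nat_recr // -[X in _ * X = _]/(_ + _) mulrDr IHn.
rewrite mulrA [_ * (2 ^+ _ * _)]mulrCA sqr_add4_fibP (lucP_SS x n) !exprS.
by field; rewrite xn_neq0 x_neq0.
Qed.

End WeightedSums.

Lemma sqr_add4_neq0 (x : C) : x != 2 * 'i -> x != - (2 * 'i) -> x ^+ 2 + 4 != 0.
Proof.
move=> x_neq_2i x_neq_m2i.
have -> : x ^+ 2 + 4 = (x - 2 * 'i) * (x + 2 * 'i).
  by rewrite -subr_sqr exprMn sqrCi mulrN1 opprK -natrX.
by rewrite mulf_neq0 // ?subr_eq0 ?addr_eq0.
Qed.

Theorem corollary5 (x : C) (n : nat) : x != 0 ->
  (\sum_(0 <= k < n.+1) 2 ^+ k * lucP k x / x ^+ k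
     = 2 ^+ n.+1 * fibP n.+1 x / x ^+ n) /\
  (x != 2 * 'i -> x != - (2 * 'i) ->
   \sum_(0 <= k < n.+1) 2 ^+ k * fibP k x / x ^+ k
     = x / (x ^+ 2 + 4) * (2 ^+ n.+1 * lucP n.+1 x / x ^+ n.+1 - 2)).
Proof.
move=> x_neq0; split; first exact: sum_lucP.
by move=> x_neq_2i x_neq_m2i; apply: sum_fibP => //; apply: sqr_add4_neq0.
Qed.
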